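(* Let $k\ge 2$ be an integer. Let $M$ be an $n\times n$ matrix with entries in $\{0,\pm1,\pm2,\dots,\pm\lfloor k/2\rfloor\}$ satisfying $M^T=-M$ and $MM^T=mI$, where $m\equiv -1\pmod k$. Let $C_k(M)$ be the $\mathbb{Z}_k$-code of length $2n$ with generator matrix $(I\ \ M)$, entries read modulo $k$. Let $a,b,c,d$ be integers with $a\equiv d\pmod k$ and $b\equiv c\pmod k$. Then $C_k(M)$ is a self-dual $\mathbb{Z}_k$-code, $A_k(C_k(M))$ is a unimodular lattice, and the $2n$ rows of the matrix \[ F(M)=\frac{1}{\sqrt{k}}\begin{pmatrix} aI+bM & cI+dM\\ -cI+dM & aI-bM\end{pmatrix} \] form a $\frac{1}{k}(a^2+mb^2+c^2+md^2)$-frame of $A_k(C_k(M))$.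
   Context: A $\mathbb{Z}_k$-code of length $N$ is a $\mathbb{Z}_k$-submodule of $\mathbb{Z}_k^N$; it is self-dual if it equals its dual under the standard inner product. Construction A: with $\rho:\mathbb{Z}_k\to\mathbb{Z}$ sending $0,1,\dots,k-1$ to $0,1,\dots,k-1$, for a $\mathbb{Z}_k$-code $C$ of length $N$ set $A_k(C)=\frac{1}{\sqrt{k}}\{\rho(C)+k\mathbb{Z}^N\}$. A lattice $L$ is unimodular if $L=L^*$ where $L^*=\{x:(x,y)\in\mathbb{Z}\ \forall y\in L\}$. For a lattice $L$ in dimension $N$, a set $\{f_1,\dots,f_N\}$ of vectors of $L$ with $(f_i,f_j)=t\,\delta_{i,j}$ is called a $t$-frame of $L$. *)

From HB Require Import structures.
From mathcomp Require Import all_boot all_order all_algebra.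
From mathcomp Require Import reals.
Set Implicit Arguments. Unset Strict Implicit. Unset Printing Implicit Defensive.
Import Order.TTheory GRing.Theory Num.Theory.
Local Open Scope ring_scope.

Definition zk_dot (k N : nat) (x y : 'rV['Z_k]_N) : 'Z_k :=
  \sum_(i < N) x 0 i * y 0 i.

Definition is_Zk_code (k N : nat) (C : {set 'rV['Z_k]_N}) : Prop :=
  0 \in C /\ (forall x y, x \in C -> y \in C -> x + y \in C) /\
  (forall (a : 'Z_k) x, x \in C -> a *: x \in C).

Definition dual_code (k N : nat) (C : {set 'rV['Z_k]_N}) : {set 'rV['Z_k]_N} :=
  [set x | [forall y in C, zk_dot x y == 0]].

Definition self_dual (k N : nat) (C : {set 'rV['Z_k]_N}) : Prop :=
  C = dual_code C.

Definition gen_code (k r N : nat) (G : 'M['Z_k]_(r, N)) : {set 'rV['Z_k]_N} :=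
  [set u *m G | u : 'rV['Z_k]_r].

Definition rho (k : nat) (x : 'Z_k) : int := (nat_of_ord x)%:Z.

Definition constructionA (R : realType) (k N : nat) (C : {set 'rV['Z_k]_N})
  (x : 'rV[R]_N) : Prop :=
  exists2 c, c \in C &
    exists z : 'rV[int]_N,
      x = (Num.sqrt (k%:R : R))^-1 *:
            map_mx (fun t : int => t%:~R : R) (map_mx (@rho k) c + (k%:Z) *: z).

Definition dotR (R : realType) (N : nat) (x y : 'rV[R]_N) : R :=
  \sum_(i < N) x 0 i * y 0 i.

Definition unimodular (R : realType) (N : nat) (L : 'rV[R]_N -> Prop) : Prop :=
  forall x, L x <-> (forall y, L y -> dotR x y \is a Num.int).

Definition is_frame (R : realType) (N : nat) (L : 'rV[R]_N -> Prop) (t : R)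
  (f : 'I_N -> 'rV[R]_N) : Prop :=
  (forall i, L (f i)) /\
  (forall i j, dotR (f i) (f j) = if i == j then t else 0).

From HB Require Import structures.
From mathcomp Require Import all_boot all_order all_algebra.
From mathcomp Require Import reals.
From mathcomp Require Import ring.
Set Implicit Arguments. Unset Strict Implicit.
Import Order.TTheory GRing.Theory Num.Theory.
Local Open Scope ring_scope.

(* Modulo k the matrix N := M satisfies N N^T = -I, so the generator matrix
   G = (I N) has G G^T = 0; conversely x G^T = 0 forces x = x_1 G, so the code
   is self-dual, and Construction A turns a self-dual code into a unimodular
   lattice.  Since M^T = -M and M^2 = -mI, the matrices aI + bM multiply like
   the complex numbers a + b sqrt(-m), which gives
   F F^T = (a^2 + mb^2 + c^2 + md^2)/k I.  Modulo k we have c = b, d = a and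
   M^2 = I, so the right half of F is its left half times M and every row of
   F lies in A_k(C). *)

Section ZpIntCast.
Variable p : nat.
Local Notation k := p.+2.

Lemma intr_Zp_eq0 (t : int) : ((t%:~R : 'Z_k) == 0) = (k %| t)%Z.
Proof.
have nat_eq0 (n : nat) : ((n%:R : 'Z_k) == 0) = (k %| n)%N.
  by rewrite -val_eqE /= val_Zp_nat.
case: t => n; first by rewrite -pmulrn nat_eq0.
by rewrite NegzE intrN oppr_eq0 -pmulrn nat_eq0 dvdzE abszN.
Qed.

Lemma intr_Zp_eqmod (x y : int) : (x = y %[mod k])%Z -> (x%:~R : 'Z_k) = y%:~R.
Proof. by move=> /eqP; rewrite eqz_mod_dvd -intr_Zp_eq0 intrB subr_eq0 => /eqP. Qed.

Lemma intr_Zp_k : ((Posz k)%:~R : 'Z_k) = 0.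
Proof. by apply/eqP; rewrite intr_Zp_eq0. Qed.

Lemma intr_rho (x : 'Z_k) : (rho x)%:~R = x.
Proof. by rewrite -pmulrn natr_Zp. Qed.

Lemma rho_intr (t : int) : rho (t%:~R : 'Z_k) = (t %% k)%Z.
Proof.
have t_mod_ge0 : (0 <= t %% k)%Z by apply: modz_ge0.
have t_mod_lt : (t %% k < k)%Z by apply: ltz_pmod.
rewrite -(gez0_abs t_mod_ge0) in t_mod_lt *.
set n := `|(t %% k)%Z|%N in t_mod_lt *.
have -> : (t%:~R : 'Z_k) = n%:R.
  by rewrite pmulrn; apply: intr_Zp_eqmod; rewrite /n gez0_abs // modz_mod.
by rewrite /rho val_Zp_nat // modn_small.
Qed.

End ZpIntCast.

Section GeneratedCode.
Variable k : nat.

Lemma zk_dotE N (x y : 'rV['Z_k]_N) : zk_dot x y = (x *m y^T) 0 0.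
Proof. by rewrite /zk_dot !mxE; apply: eq_bigr => i _; rewrite !mxE. Qed.

Lemma gen_codeP r N (G : 'M['Z_k]_(r, N)) x :
  reflect (exists u, x = u *m G) (x \in gen_code G).
Proof. by apply: (iffP imsetP) => [[u _ ->]|[u ->]]; exists u. Qed.

Lemma row_mul_gen_code s r N (A : 'M['Z_k]_(s, r)) (G : 'M_(r, N)) i :
  row i (A *m G) \in gen_code G.
Proof. by apply/gen_codeP; exists (row i A); rewrite row_mul. Qed.

Lemma gen_code_Zk_code r N (G : 'M['Z_k]_(r, N)) : is_Zk_code (gen_code G).
Proof.
split; first by apply/gen_codeP; exists 0; rewrite mul0mx.
split=> [x y /gen_codeP[u ->] /gen_codeP[v ->]|a x /gen_codeP[u ->]];
  apply/gen_codeP.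
- by exists (u + v); rewrite mulmxDl.
- by exists (a *: u); rewrite scalemxAl.
Qed.

Lemma gen_code_dual r N (G : 'M['Z_k]_(r, N)) x :
  (x \in dual_code (gen_code G)) = (x *m G^T == 0).
Proof.
rewrite inE; apply/forall_inP/eqP => [x_perp|xG0 y /gen_codeP[u ->]].
  apply/rowP => j; rewrite [RHS]mxE.
  have /eqP <- := x_perp _ (row_mul_gen_code 1%:M G j).
  by rewrite mul1mx /zk_dot mxE; apply: eq_bigr => l _; rewrite !mxE.
by rewrite zk_dotE trmx_mul mulmxA xG0 mul0mx mxE.
Qed.

Lemma self_dual_gen_code_row_mx n (Nk : 'M['Z_k]_n) :
  Nk *m Nk^T = - 1%:M -> self_dual (gen_code (row_mx 1%:M Nk)).
Proof.
move=> NNT; set G := row_mx 1%:M Nk.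
have GGT : G *m G^T = 0 by rewrite tr_row_mx mul_row_col trmx1 mulmx1 NNT subrr.
have NTN : Nk^T *m Nk = - 1%:M.
  apply/eqP; rewrite -eqr_oppLR -mulNmx; apply/eqP/mulmx1C.
  by rewrite mulmxN NNT opprK.
apply/setP => x; rewrite gen_code_dual; apply/idP/idP.
  by move=> /gen_codeP[u ->]; rewrite -mulmxA GGT mulmx0.
rewrite -(hsubmxK x) tr_row_mx mul_row_col trmx1 mulmx1 addr_eq0 => /eqP x1E.
apply/gen_codeP; exists (lsubmx x).
by rewrite mul_mx_row mulmx1 x1E mulNmx -mulmxA NTN mulmxN mulmx1 opprK.
Qed.

End GeneratedCode.

Section Pencil.
Variables (R : comNzRingType) (n : nat) (M : 'M[R]_n).

Definition pencil_mx (a b : R) : 'M[R]_n := a%:M + b *: M.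

Lemma pencil_mxD a b c d :
  pencil_mx a b + pencil_mx c d = pencil_mx (a + c) (b + d).
Proof. by rewrite /pencil_mx raddfD scalerDl addrACA. Qed.

Lemma pencil_mxM m a b c d : M *m M = (- m)%:M ->
  pencil_mx a b *m pencil_mx c d = pencil_mx (a * c - m * (b * d)) (a * d + b * c).
Proof.
move=> MM; rewrite /pencil_mx mulmxDl !mulmxDr -!scalemxAl -!scalemxAr MM.
rewrite !mul_scalar_mx mul_mx_scalar !scalerA !scale_scalar_mx.
rewrite [X in _ + X]addrC addrACA -raddfD -scalerDl.
by congr (_%:M + _ *: _); ring.
Qed.

Lemma tr_pencil_mx a b : M^T = - M -> (pencil_mx a b)^T = pencil_mx a (- b).
Proof.
by move=> MT; rewrite /pencil_mx linearD /= linearZ /= tr_scalar_mx MT scalerN scaleNr.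
Qed.

Lemma pencil_mxMr a b : M *m M = 1%:M -> pencil_mx a b *m M = pencil_mx b a.
Proof.
by move=> MM; rewrite /pencil_mx mulmxDl -scalemxAl MM mul_scalar_mx scalemx1 addrC.
Qed.

Definition frame_mx (a b c d : R) : 'M[R]_(n + n) :=
  block_mx (pencil_mx a b) (pencil_mx c d) (pencil_mx (- c) d) (pencil_mx a (- b)).

Lemma frame_mx_gram m a b c d : M^T = - M -> M *m M^T = m%:M ->
  frame_mx a b c d *m (frame_mx a b c d)^T
  = (a ^+ 2 + m * b ^+ 2 + c ^+ 2 + m * d ^+ 2)%:M.
Proof.
move=> MT MMT.
have MM : M *m M = (- m)%:M by rewrite -[X in _ *m X]opprK -MT mulmxN MMT raddfN.
rewrite scalar_mx_block tr_block_mx !tr_pencil_mx // mulmx_block.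
rewrite !(pencil_mxM _ _ _ _ MM) !pencil_mxD.
have pencil_scalar e : (pencil_mx e 0 = e%:M) * (pencil_mx 0 0 = 0).
  by rewrite /pencil_mx !scale0r !addr0 raddf0.
rewrite -!(pencil_scalar _).1 -(pencil_scalar 0).2.
by congr (block_mx (pencil_mx _ _) (pencil_mx _ _) (pencil_mx _ _) (pencil_mx _ _));
  ring.
Qed.

Lemma frame_mx_factor a b : M *m M = 1%:M ->
  frame_mx a b b a = col_mx (pencil_mx a b) (pencil_mx (- b) a) *m row_mx 1%:M M.
Proof. by move=> MM; rewrite mul_col_row !mulmx1 !pencil_mxMr. Qed.

End Pencil.

Lemma map_frame_mx (R S : comNzRingType) (f : {rmorphism R -> S}) n
    (M : 'M[R]_n) a b c d :
  map_mx f (frame_mx M a b c d) = frame_mx (map_mx f M) (f a) (f b) (f c) (f d).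
Proof.
by rewrite /frame_mx map_block_mx /pencil_mx !map_mxD !map_mxZ !map_scalar_mx !rmorphN.
Qed.

Lemma dotR_row (R : realType) r N (A : 'M[R]_(r, N)) i j :
  dotR (row i A) (row j A) = (A *m A^T) i j.
Proof. by rewrite /dotR !mxE; apply: eq_bigr => l _; rewrite !mxE. Qed.

Section ConstructionA.
Variables (R : realType) (p N : nat).
Local Notation k := p.+2.
Local Notation s := (Num.sqrt (k%:R : R))^-1.
Local Notation toR w := (map_mx (fun t : int => (t%:~R : R)) w).
Local Notation toZk w := (map_mx (fun t : int => (t%:~R : 'Z_k)) w).

Lemma inv_sqrt_sqr : s * s = k%:R^-1.
Proof. by rewrite -invfM -expr2 sqr_sqrtr ?ler0n. Qed.

Lemma constructionAP (C : {set 'rV['Z_k]_N}) (x : 'rV[R]_N) :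
  constructionA C x <-> exists2 w : 'rV[int]_N, toZk w \in C & x = s *: toR w.
Proof.
split=> [[c cC [z ->]]|[w wC ->]].
  exists (map_mx (@rho k) c + (Posz k) *: z) => //.
  rewrite map_mxD map_mxZ /= intr_Zp_k scale0r addr0.
  suff -> : toZk (map_mx (@rho k) c) = c by [].
  by apply/matrixP => i j; rewrite !mxE intr_rho.
exists (toZk w) => //; exists (map_mx (fun t => (t %/ k)%Z) w).
congr (_ *: map_mx _ _); apply/matrixP => i j; rewrite !mxE rho_intr.
by rewrite {1}(divz_eq (w i j) k) addrC mulrC.
Qed.

Lemma dotR_intr (w w' : 'rV[int]_N) :
  dotR (s *: toR w) (s *: toR w') = (\sum_(i < N) w 0 i * w' 0 i)%:~R / k%:R.
Proof.
rewrite /dotR rmorph_sum mulr_suml; apply: eq_bigr => i _.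
by rewrite !mxE rmorphM /= mulrACA inv_sqrt_sqr mulrC.
Qed.

Lemma zk_dot_intr (w w' : 'rV[int]_N) :
  zk_dot (toZk w) (toZk w') = (\sum_(i < N) w 0 i * w' 0 i)%:~R.
Proof. by rewrite /zk_dot rmorph_sum; apply: eq_bigr => i _; rewrite !mxE rmorphM. Qed.

Lemma constructionA_dot_int (C : {set 'rV['Z_k]_N}) (x y : 'rV[R]_N) :
  self_dual C -> constructionA C x -> constructionA C y -> dotR x y \is a Num.int.
Proof.
move=> sdC /constructionAP[w wC ->] /constructionAP[w' w'C ->].
have : toZk w \in dual_code C by rewrite -sdC.
rewrite inE => /forall_inP /(_ _ w'C).
rewrite zk_dot_intr intr_Zp_eq0 dotR_intr => /dvdzP[j ->].
by rewrite intrM mulfK ?pnatr_eq0 ?intr_int.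
Qed.

Lemma constructionA_scaled_delta (C : {set 'rV['Z_k]_N}) i :
  0 \in C -> constructionA C ((s * k%:R) *: delta_mx 0 i : 'rV[R]_N).
Proof.
move=> C0; apply/constructionAP; exists ((Posz k) *: delta_mx 0 i).
  by rewrite map_mxZ /= intr_Zp_k scale0r.
by rewrite map_mxZ map_delta_mx scalerA.
Qed.

Lemma constructionA_dual_sub (C : {set 'rV['Z_k]_N}) (x : 'rV[R]_N) :
  0 \in C -> self_dual C ->
  (forall y, constructionA C y -> dotR x y \is a Num.int) -> constructionA C x.
Proof.
move=> C0 sdC x_int.
have k_neq0 : (k%:R : R) != 0 by rewrite pnatr_eq0.
have coord_int i : s * k%:R * x 0 i \is a Num.int.
  have := x_int _ (constructionA_scaled_delta i C0).
  congr (_ \is a _); rewrite /dotR (bigD1 i) //= big1 => [|j ji].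
    by rewrite !mxE !eqxx mulr1 addr0 mulrC.
  by rewrite !mxE (negbTE ji) !mulr0.
set v := \row_i Num.floor (s * k%:R * x 0 i).
have xE : x = s *: toR v.
  apply/rowP => i; rewrite !mxE floorK ?coord_int //.
  by rewrite !mulrA inv_sqrt_sqr mulVf // mul1r.
apply/constructionAP; exists v => //.
rewrite sdC inE; apply/forall_inP => c cC.
set w := map_mx (@rho k) c.
have wE : toZk w = c by apply/matrixP => i j; rewrite !mxE intr_rho.
have /intrP[j] : dotR x (s *: toR w) \is a Num.int.
  by apply: x_int; apply/constructionAP; exists w; rewrite ?wE.
rewrite -wE zk_dot_intr intr_Zp_eq0 xE dotR_intr.
move=> /(congr1 (fun u => u * k%:R)); rewrite divfK // [k%:R]pmulrn -intrM => /eqP.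
by rewrite eqr_int => /eqP ->; apply/dvdzP; exists j.
Qed.

Lemma constructionA_unimodular (C : {set 'rV['Z_k]_N}) :
  0 \in C -> self_dual C -> unimodular (constructionA (R:=R) C).
Proof.
move=> C0 sdC x; split=> [Cx y Cy|].
  exact: (constructionA_dot_int sdC).
exact: constructionA_dual_sub.
Qed.

End ConstructionA.

Theorem proposition3p6 (R : realType) (k n : nat) (M : 'M[int]_n) (m a b c d : int) :
  (2 <= k)%N ->
  (forall i j, `|M i j| <= (k./2)%:Z) ->
  M^T = - M ->
  M *m M^T = m%:M ->
  (m = -1 %[mod k%:Z])%Z ->
  (a = d %[mod k%:Z])%Z ->
  (b = c %[mod k%:Z])%Z ->
  let Mk : 'M['Z_k]_n := map_mx (fun t : int => t%:~R) M in
  let C := gen_code (row_mx 1%:M Mk) in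
  let MR : 'M[R]_n := map_mx (fun t : int => t%:~R) M in
  let aR : R := a%:~R in let bR : R := b%:~R in
  let cR : R := c%:~R in let dR : R := d%:~R in
  let F : 'M[R]_(n + n) :=
    (Num.sqrt (k%:R : R))^-1 *:
      block_mx (aR%:M + bR *: MR) (cR%:M + dR *: MR)
               (- cR%:M + dR *: MR) (aR%:M - bR *: MR) in
  [/\ is_Zk_code C, self_dual C,
      unimodular (constructionA (R:=R) C) &
      is_frame (constructionA (R:=R) C)
        ((a ^+ 2 + m * b ^+ 2 + c ^+ 2 + m * d ^+ 2)%:~R / k%:R)
        (fun i => row i F)].
Proof.
(* The bound on the entries of M is not needed: only M modulo k matters. *)
case: k => [|[|p]] // _ _ MT MMT m_mod ad_mod bc_mod Mk C MR aR bR cR dR F.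
have MkMkT : Mk *m Mk^T = - 1%:M.
  by rewrite map_trmx -map_mxM MMT map_scalar_mx /= (intr_Zp_eqmod m_mod) intrN raddfN.
have MkT : Mk^T = - Mk by rewrite map_trmx MT map_mxN.
have MkMk : Mk *m Mk = 1%:M.
  by rewrite -[X in _ *m X]opprK -MkT mulmxN MkMkT opprK.
have sdC : self_dual C by apply: self_dual_gen_code_row_mx.
have FE : F = (Num.sqrt (p.+2%:R : R))^-1 *: map_mx intr (frame_mx M a b c d).
  by rewrite map_frame_mx /F /frame_mx /pencil_mx !rmorphN scaleNr.
have C0 : 0 \in C by have [] := gen_code_Zk_code (row_mx 1%:M Mk).
split; [exact: gen_code_Zk_code | exact: sdC | exact: constructionA_unimodular |].
split=> [i|i j].
- apply/constructionAP; exists (row i (frame_mx M a b c d)); last first.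
    by rewrite FE linearZ /= map_row.
  rewrite map_row map_frame_mx /= -/Mk (intr_Zp_eqmod ad_mod) (intr_Zp_eqmod bc_mod).
  by rewrite frame_mx_factor // row_mul_gen_code.
- rewrite dotR_row FE linearZ /= -scalemxAl -scalemxAr scalerA inv_sqrt_sqr.
  rewrite map_trmx -map_mxM (frame_mx_gram _ _ _ _ MT MMT) map_scalar_mx !mxE.
  by case: eqP => _; rewrite ?mulr1 ?mulr0 // mulrC.
Qed.
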